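(* Let $\Omega\subset\mathbb{R}^N$ be a bounded open connected set, $F:\Omega\times\mathbb{R}\times\mathcal{S}(N)\to\mathbb{R}$ continuous with $\Gamma(x):=\{(r,A):F(x,r,A)=0\}\neq\emptyset$ for each $x\in\Omega$, and let $\Phi$ be a proper elliptic map on $\Omega$ such that $F(x,r+s,A+P)\ge F(x,r,A)$ for all $x\in\Omega$, $(r,A)\in\Phi(x)$, $(s,P)\in\mathcal{Q}$. Assume that $\Phi(x)\cap\Gamma(x)\neq\emptyset$ for each $x\in\Omega$ and that $\partial\Phi(x)\subset\{(r,A)\in\mathbb{R}\times\mathcal{S}(N):F(x,r,A)\le 0\}$ for each $x\in\Omega$. Then the map $\Theta(x):=\{(r,A)\in\Phi(x):F(x,r,A)\ge 0\}$ is a proper elliptic map and $\partial\Theta(x)\subset\Gamma(x)$ for every $x\in\Omega$ (i.e. $\Theta$ defines a proper elliptic branch of $F(x,u,D^2u)=0$).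
   Context: $\mathcal{S}(N)$: real symmetric $N\times N$ matrices with the usual partial order. $\mathcal{Q}:=\{(s,P)\in\mathbb{R}\times\mathcal{S}(N): s\le0,\ P\ge0\}$. A proper elliptic map $\Phi$ on $\Omega$ assigns to each $x\in\Omega$ a closed, nonempty set $\Phi(x)\subsetneq\mathbb{R}\times\mathcal{S}(N)$ with $\Phi(x)+\mathcal{Q}\subset\Phi(x)$. $\partial$ denotes topological boundary in $\mathbb{R}\times\mathcal{S}(N)$. *)

From HB Require Import structures.
From mathcomp Require Import all_boot all_order all_algebra.
From mathcomp Require Import all_classical all_reals all_analysis.
Set Implicit Arguments. Unset Strict Implicit. Unset Printing Implicit Defensive.
Import Order.TTheory GRing.Theory Num.Theory.
Import numFieldNormedType.Exports.
Local Open Scope classical_set_scope.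
Local Open Scope ring_scope.

(* S(N) is represented as the symmetric matrices inside 'M[R]_N; the space
   R x S(N) is the set [symspace R N] inside the topological space R * 'M[R]_N,
   equipped with the subspace topology. *)

Definition symmx (R : realType) (N : nat) (A : 'M[R]_N) : Prop := A^T = A.

Definition symspace (R : realType) (N : nat) : set (R * 'M[R]_N) :=
  [set p | symmx p.2].
Arguments symspace : clear implicits.

Definition psd (R : realType) (N : nat) (P : 'M[R]_N) : Prop :=
  forall v : 'cV[R]_N, 0 <= (v^T *m P *m v) 0 0.

Definition Qcone (R : realType) (N : nat) : set (R * 'M[R]_N) :=
  [set p | p.1 <= 0 /\ symmx p.2 /\ psd p.2].
Arguments Qcone : clear implicits.

Definition msum (R : realType) (N : nat) (S T : set (R * 'M[R]_N))
  : set (R * 'M[R]_N) :=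
  [set p | exists a b, S a /\ T b /\ p = (a.1 + b.1, a.2 + b.2)].

Definition rel_closed (T : topologicalType) (D S : set T) : Prop :=
  closure S `&` D `<=` S.

Definition rel_boundary (T : topologicalType) (D S : set T) : set T :=
  [set p | D p /\ forall U, nbhs p U ->
     (U `&` S !=set0) /\ (U `&` (D `\` S) !=set0)].

Definition proper_elliptic_map (R : realType) (N : nat)
  (Omega : set 'rV[R]_N) (Phi : 'rV[R]_N -> set (R * 'M[R]_N)) : Prop :=
  forall x, Omega x ->
    [/\ Phi x `<=` symspace R N,
        rel_closed (symspace R N) (Phi x),
        Phi x !=set0,
        Phi x <> symspace R N
      & msum (Phi x) (Qcone R N) `<=` Phi x].

(* Theta x is the superlevel set {F(x, .) >= 0} inside Phi x.  It inherits
   Q-monotonicity from Phi x by the monotonicity of F along Q, and relative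
   closedness because F(x, .) is continuous.  At a boundary point p of Theta x
   we have F >= 0 by closedness; if F were > 0 at p, then near p the sets
   Theta x and Phi x would coincide, so p would lie on the boundary of Phi x,
   where F <= 0 by hypothesis.  Hence F = 0 on the boundary of Theta x. *)

From HB Require Import structures.
From mathcomp Require Import all_boot all_order all_algebra.
From mathcomp Require Import all_classical all_reals all_analysis.
Import Order.TTheory GRing.Theory Num.Theory.
Import numFieldNormedType.Exports.
Local Open Scope classical_set_scope.
Local Open Scope ring_scope.

Lemma within_continuous_nbhs {T U : topologicalType} {D : set T} {f : T -> U}
    {p : T} {V : set U} :
  {within D, continuous f} -> D p -> nbhs (f p) V ->
  nbhs p [set q | D q -> V (f q)].
Proof. by move=> /subspace_continuousP f_cont Dp; apply: f_cont. Qed.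

Lemma continuous_within_section {X Y Z : topologicalType} {A : set X}
    {B : set Y} {f : X * Y -> Z} {x : X} :
  {within A `*` B, continuous f} -> A x ->
  {within B, continuous (fun y => f (x, y))}.
Proof.
move=> f_cont Ax; apply/subspace_continuousP => y By V fV.
have pair_cont : (fun y' => (x, y')) @ nbhs y --> nbhs (x, y).
  by apply: cvg_pair; [exact: cvg_cst | exact: cvg_id].
have ABxy : (A `*` B) (x, y) by split.
have f_near := within_continuous_nbhs f_cont ABxy fV.
apply: filterS (pair_cont _ f_near : nbhs y _) => y' /= fy' By'.
exact: fy'.
Qed.

Lemma rel_boundary_closure {T : topologicalType} {D S : set T} :
  rel_boundary D S `<=` closure S.
Proof. by move=> p [_ bdp] U /bdp [[q [Uq Sq]] _]; exists q. Qed.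

Section SuperlevelSet.
Context {T : topologicalType} {R : realType} (D C : set T) (f : T -> R).
Hypotheses (f_cont : {within D, continuous f}) (CD : C `<=` D)
  (C_closed : rel_closed D C).

Lemma rel_closed_superlevel : rel_closed D [set p | C p /\ 0 <= f p].
Proof.
move=> p [clp Dp].
have Cp : C p by apply: C_closed; split=> //; apply: closureS clp => q [].
split=> //; rewrite leNgt; apply/negP => fp_lt0.
have fneg : nbhs (f p) [set y : R | y < 0] by apply: open_nbhs_nbhs.
have [q [[Cq fq_ge0] fq_lt0]] := clp _ (within_continuous_nbhs f_cont Dp fneg).
by move: (le_lt_trans fq_ge0 (fq_lt0 (CD _ Cq))); rewrite ltxx.
Qed.

Lemma rel_boundary_superlevel :
  rel_boundary D C `<=` [set p | f p <= 0] ->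
  rel_boundary D [set p | C p /\ 0 <= f p] `<=` [set p | D p /\ f p = 0].
Proof.
move=> bdC_nonpos p /[dup] bdp [Dp bdCp].
have clp := rel_boundary_closure _ bdp.
have [_ fp_ge0] := rel_closed_superlevel _ (conj clp Dp).
split=> //; apply/eqP; rewrite eq_le fp_ge0 andbT leNgt; apply/negP => fp_gt0.
have fpos : nbhs (f p) [set y : R | 0 < y] by apply: open_nbhs_nbhs.
pose W := [set q | D q -> 0 < f q].
have W_nbhs : nbhs p W := within_continuous_nbhs f_cont Dp fpos.
suff /(bdC_nonpos p) : rel_boundary D C p by rewrite /= leNgt fp_gt0.
split=> // U Up.
have [[q [[Uq _] [Cq _]]] [q' [[Uq' Wq'] [Dq' notCq']]]] :=
  bdCp _ (filterI Up W_nbhs).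
split; first by exists q.
exists q'; split=> //; split=> // Cq'; apply: notCq'; split=> //.
exact: ltW (Wq' Dq').
Qed.

End SuperlevelSet.

Lemma proper_elliptic_superlevel (R : realType) (N : nat)
    (Omega : set 'rV[R]_N) (Phi : 'rV[R]_N -> set (R * 'M[R]_N))
    (G : 'rV[R]_N -> R * 'M[R]_N -> R) :
  proper_elliptic_map Omega Phi ->
  (forall x, Omega x -> {within symspace R N, continuous G x}) ->
  (forall x, Omega x -> [set p | Phi x p /\ 0 <= G x p] !=set0) ->
  (forall x a b, Omega x -> Phi x a -> Qcone R N b ->
     G x a <= G x (a.1 + b.1, a.2 + b.2)) ->
  proper_elliptic_map Omega (fun x => [set p | Phi x p /\ 0 <= G x p]).
Proof.
move=> Phi_elliptic G_cont Theta_neq0 G_mono x Ox.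
have [Phi_sym Phi_closed _ Phi_neqT Phi_Q] := Phi_elliptic x Ox.
split=> //.
- by move=> p [/Phi_sym].
- exact: rel_closed_superlevel (G_cont x Ox) Phi_sym Phi_closed.
- exact: Theta_neq0.
- move=> Theta_eqT; apply: Phi_neqT; apply/seteqP; split=> // p Sp.
  by have [] : [set p | Phi x p /\ 0 <= G x p] p by rewrite Theta_eqT.
- move=> _ [a [b [[Phia Ga_ge0] [Qb ->]]]]; split.
    by apply: Phi_Q; exists a, b.
  exact: le_trans Ga_ge0 (G_mono x a b Ox Phia Qb).
Qed.

Theorem theorem6p3 (R : realType) (N : nat) (Omega : set 'rV[R]_N)
  (F : 'rV[R]_N -> R -> 'M[R]_N -> R) (Phi : 'rV[R]_N -> set (R * 'M[R]_N)) :
  open Omega -> bounded_set Omega -> connected Omega ->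
  {within [set q : 'rV[R]_N * (R * 'M[R]_N) | Omega q.1 /\ symmx q.2.2],
     continuous (fun q => F q.1 q.2.1 q.2.2)} ->
  (forall x, Omega x -> [set p | symmx p.2 /\ F x p.1 p.2 = 0] !=set0) ->
  proper_elliptic_map Omega Phi ->
  (forall x r A s P, Omega x -> Phi x (r, A) -> Qcone R N (s, P) ->
     F x r A <= F x (r + s) (A + P)) ->
  (forall x, Omega x ->
     Phi x `&` [set p | symmx p.2 /\ F x p.1 p.2 = 0] !=set0) ->
  (forall x, Omega x ->
     rel_boundary (symspace R N) (Phi x) `<=` [set p | F x p.1 p.2 <= 0]) ->
  let Theta := fun x => [set p | Phi x p /\ 0 <= F x p.1 p.2] in
  proper_elliptic_map Omega Theta /\
  (forall x, Omega x ->
     rel_boundary (symspace R N) (Theta x) `<=`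
       [set p | symmx p.2 /\ F x p.1 p.2 = 0]).
Proof.
move=> _ _ _ F_cont _ Phi_elliptic F_mono Phi_meets_Gamma Phi_bd_nonpos Theta.
have F_section x : Omega x ->
    {within symspace R N, continuous (fun p => F x p.1 p.2)}.
  exact: (continuous_within_section (A := Omega) (B := symspace R N) F_cont).
split.
  apply: proper_elliptic_superlevel => // [x Ox | x [r A] [s P]].
    have [p [Phip [_ Fp0]]] := Phi_meets_Gamma x Ox.
    by exists p; rewrite /= Fp0.
  exact: F_mono.
move=> x Ox; have [Phi_sym Phi_closed _ _ _] := Phi_elliptic x Ox.
exact: rel_boundary_superlevel (F_section x Ox) Phi_sym Phi_closed
  (Phi_bd_nonpos x Ox).
Qed.
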